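(* Let $\Lambda$ be a lattice of $\mathbf R^l$, $\Omega\in\mathbf R^l$, $R>0$, and assume $\Lambda^*_R\ne\emptyset$. Let $p\in\Lambda^*_R$ be such that $p\cdot\Omega=\alpha:=\alpha(\Lambda,\Omega,R)$, and assume $\alpha>0$. Let $E=\{p\}^\perp$. Then $\Lambda_0:=\Lambda\cap E$ is a lattice of $E$. Moreover, setting $(\Lambda_0)^*=\{q\in E:\ q\cdot x\in\mathbf Z\ \forall x\in\Lambda_0\}$, $(\Lambda_0)^*_{\sqrt3R/2}=\{q\in(\Lambda_0)^*:\ 0<|q|\le\sqrt3R/2\}$ and $\beta=\inf\{|q\cdot\Omega|:\ q\in(\Lambda_0)^*_{\sqrt3R/2}\}$: (i) $\dfrac{\alpha}{\beta|p|}\le\dfrac2R$; in particular $\alpha\le2\beta$; (ii) $\alpha(\Lambda,\Omega,\sqrt7R/2)\le\beta$.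
   Context: A lattice of $\mathbf R^l$ is a discrete subgroup $\Lambda$ with $\mathbf R^l/\Lambda$ of finite volume. $\Lambda^*=\{p\in\mathbf R^l:\ p\cdot\lambda\in\mathbf Z\ \forall\lambda\in\Lambda\}$, $\Lambda^*_R=\{p\in\Lambda^*:\ 0<|p|\le R\}$ with $|\cdot|$ Euclidean, $\alpha(\Lambda,\Omega,R)=\inf\{|p\cdot\Omega|:\ p\in\Lambda^*_R\}$, and $\inf\emptyset=+\infty$. *)

From mathcomp Require Import all_boot all_order all_algebra.
From mathcomp Require Import all_classical all_reals ereal.
Set Implicit Arguments. Unset Strict Implicit. Unset Printing Implicit Defensive.
Import Order.TTheory GRing.Theory Num.Theory.
Local Open Scope classical_set_scope.
Local Open Scope ring_scope.

Definition dotv (R : realType) (l : nat) (x y : 'rV[R]_l) : R :=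
  \sum_(i < l) x 0 i * y 0 i.

Definition normv (R : realType) (l : nat) (x : 'rV[R]_l) : R :=
  Num.sqrt (dotv x x).

Definition is_lattice_of (R : realType) (l : nat)
  (E : set 'rV[R]_l) (L : set 'rV[R]_l) : Prop :=
  exists (k : nat) (b : 'I_k -> 'rV[R]_l),
    (forall i, E (b i)) /\
    (forall c : 'I_k -> R, \sum_(i < k) c i *: b i = 0 -> forall i, c i = 0) /\
    (forall x, E x -> exists c : 'I_k -> R, x = \sum_(i < k) c i *: b i) /\
    (forall x, L x <-> exists z : 'I_k -> int, x = \sum_(i < k) (z i)%:~R *: b i).

Definition dual_in (R : realType) (l : nat) (E L : set 'rV[R]_l) : set 'rV[R]_l :=
  [set q | E q /\ forall x, L x -> exists z : int, dotv q x = z%:~R].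

Definition dual_ball (R : realType) (l : nat) (E L : set 'rV[R]_l) (r : R)
  : set 'rV[R]_l :=
  [set q | dual_in E L q /\ 0 < normv q /\ normv q <= r].

(* infimum of |q . Omega| over the dual ball, extended real; inf of empty set = +oo *)
Definition alpha_in (R : realType) (l : nat) (E L : set 'rV[R]_l)
  (Omega : 'rV[R]_l) (r : R) : \bar R :=
  ereal_inf [set (`|dotv q Omega|)%:E | q in dual_ball E L r].

Definition alpha (R : realType) (l : nat) (L : set 'rV[R]_l)
  (Omega : 'rV[R]_l) (r : R) : \bar R :=
  alpha_in setT L Omega r.

From mathcomp Require Import all_boot all_order all_algebra.
From mathcomp Require Import all_classical all_reals ereal.
From mathcomp Require Import ring lra.
Import Order.TTheory GRing.Theory Num.Theory.
Local Open Scope classical_set_scope.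
Local Open Scope ring_scope.
Set Implicit Arguments. Unset Strict Implicit.

(* Since p is in the dual of Lam, the values of p on a basis of Lam form an
   integer vector; a unimodular change of basis (Smith normal form) reduces it
   to a multiple of the first unit vector.  So Lam has a basis b0, b1, ..., bk
   with p.b0 <> 0 and p.bi = 0 for i > 0, and b1, ..., bk is a basis of Lam0.
   Every q in the dual of Lam0 then lifts to the dual of Lam as q + t p, for all
   t in a coset s + Z; such a lift has squared norm |q|^2 + t^2 |p|^2 and pairs
   with Omega to q.Omega + t alpha.
   (i) If |q.Omega| < alpha R / (2|p|), some t in s + Z with |t| <= R / (2|p|)
   gives |q.Omega + t alpha| < alpha for a lift of norm at most R, against the
   minimality of alpha.
   (ii) A t in s + Z with |t| <= 1 moving q.Omega towards 0 gives a lift of norm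
   at most sqrt 7 R / 2 with |v.Omega| <= |q.Omega|. *)

Section DotProduct.
Variables (R : realType) (l : nat).
Implicit Types (x y z : 'rV[R]_l).

Lemma dotvE x y : dotv x y = (x *m y^T) 0 0.
Proof. by rewrite /dotv mxE; apply: eq_bigr => i _; rewrite mxE. Qed.

Lemma dotvC x y : dotv x y = dotv y x.
Proof. by apply: eq_bigr => i _; rewrite mulrC. Qed.

Lemma dotvDl x y z : dotv (x + y) z = dotv x z + dotv y z.
Proof. by rewrite !dotvE mulmxDl mxE. Qed.

Lemma dotvZl a x y : dotv (a *: x) y = a * dotv x y.
Proof. by rewrite !dotvE -scalemxAl mxE. Qed.

Lemma dotvDr x y z : dotv x (y + z) = dotv x y + dotv x z.
Proof. by rewrite !(dotvC x) dotvDl. Qed.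

Lemma dotvZr a x y : dotv x (a *: y) = a * dotv x y.
Proof. by rewrite !(dotvC x) dotvZl. Qed.

Lemma dotv_row k (M : 'M[R]_(k, l)) y i : dotv (row i M) y = (M *m y^T) i 0.
Proof. by rewrite dotvE -row_mul mxE. Qed.

Lemma dotv_mulmx k (u : 'rV[R]_k) (M : 'M[R]_(k, l)) y :
  dotv (u *m M) y = (u *m (M *m y^T)) 0 0.
Proof. by rewrite dotvE mulmxA. Qed.

Lemma dotvv_ge0 x : 0 <= dotv x x.
Proof. by apply: sumr_ge0 => i _; rewrite -expr2 sqr_ge0. Qed.

Lemma normv_ge0 x : 0 <= normv x.
Proof. exact: sqrtr_ge0. Qed.

Lemma sqr_normv x : normv x ^+ 2 = dotv x x.
Proof. by rewrite sqr_sqrtr // dotvv_ge0. Qed.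

Lemma normv_gt0 x : (0 < normv x) = (0 < dotv x x).
Proof. exact: sqrtr_gt0. Qed.

Lemma normv_le x c : 0 <= c -> (normv x <= c) = (normv x ^+ 2 <= c ^+ 2).
Proof. by move=> c_ge0; rewrite ler_sqr ?nnegrE ?normv_ge0. Qed.

End DotProduct.

Section LatticeBasis.
Variables (R : realType) (l : nat).

Definition lattice_basis k (E L : set 'rV[R]_l) (B : 'M[R]_(k, l)) : Prop :=
  [/\ forall i, E (row i B),
      forall c : 'rV_k, c *m B = 0 -> c = 0,
      forall x, E x -> exists c : 'rV_k, x = c *m B
    & forall x, L x <-> exists z : 'rV[int]_k, x = map_mx intr z *m B].

Lemma lattice_basisP k (E L : set 'rV[R]_l) (B : 'M[R]_(k, l)) b :
  (forall i, row i B = b i) ->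
  lattice_basis E L B <->
  (forall i, E (b i)) /\
  (forall c : 'I_k -> R, \sum_(i < k) c i *: b i = 0 -> forall i, c i = 0) /\
  (forall x, E x -> exists c : 'I_k -> R, x = \sum_(i < k) c i *: b i) /\
  (forall x, L x <-> exists z : 'I_k -> int, x = \sum_(i < k) (z i)%:~R *: b i).
Proof.
move=> Bb.
have sumE (c : 'I_k -> R) : \sum_i c i *: b i = \row_i c i *m B.
  by rewrite mulmx_sum_row; apply: eq_bigr => i _; rewrite mxE Bb.
have mulE (u : 'rV_k) : u *m B = \sum_i u 0 i *: b i.
  by rewrite mulmx_sum_row; apply: eq_bigr => i _; rewrite Bb.
split=> [[hE hind hspan hL]|[hE [hind [hspan hL]]]].
  split; [by move=> i; rewrite -Bb | split; [|split]].
  - by move=> c; rewrite sumE => /hind /rowP c0 i; have := c0 i; rewrite !mxE.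
  - by move=> x /hspan [c ->]; exists (fun i => c 0 i); exact: mulE.
  move=> x; split=> [/hL [z ->]|[z ->]].
    by exists (fun i => z 0 i); rewrite mulE; apply: eq_bigr => i _; rewrite mxE.
  apply/hL; exists (\row_i z i); rewrite sumE; congr (_ *m _).
  by apply/rowP => i; rewrite !mxE.
split; first by move=> i; rewrite Bb.
- move=> c cB0; apply/rowP => i; rewrite mxE.
  by apply: (hind (fun i => c 0 i)); rewrite -mulE.
- by move=> x /hspan [c ->]; exists (\row_i c i); rewrite sumE.
move=> x; split=> [/hL [z ->]|[z ->]].
  exists (\row_i z i); rewrite sumE; congr (_ *m _).
  by apply/rowP => i; rewrite !mxE.
by apply/hL; exists (fun i => z 0 i); rewrite mulE; apply: eq_bigr => i _; rewrite mxE.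
Qed.

Lemma is_lattice_ofP (E L : set 'rV[R]_l) :
  is_lattice_of E L <-> exists k (B : 'M[R]_(k, l)), lattice_basis E L B.
Proof.
split=> [[k [b hb]]|[k [B hB]]].
  by exists k, (\matrix_i b i); apply/(lattice_basisP _ _ (rowK b)).
by exists k, (fun i => row i B); apply/(lattice_basisP _ _ (fun i => erefl)).
Qed.

Lemma lattice_basis_mem k E L (B : 'M[R]_(k, l)) i :
  lattice_basis E L B -> L (row i B).
Proof. by case=> _ _ _ hL; apply/hL; exists (delta_mx 0 i); rewrite map_delta_mx -rowE. Qed.

Lemma dual_in_basis k E L (B : 'M[R]_(k, l)) v :
  lattice_basis E L B -> (forall i, dotv v (row i B) \is a Num.int) ->
  dual_in setT L v.
Proof.
case=> _ _ _ hL vB; split=> // x /hL [z ->]; apply/intrP.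
rewrite dotvC dotv_mulmx mxE; apply: rpred_sum => i _.
by rewrite mxE rpredM ?intr_int // -dotv_row dotvC.
Qed.

Lemma lattice_basis_unimodular k L (B : 'M[R]_(k, l)) (W : 'M[int]_k) :
  W \in unitmx -> lattice_basis setT L B ->
  lattice_basis setT L (map_mx intr W *m B).
Proof.
move=> Wu [_ hind hspan hL].
have WV : map_mx intr W *m map_mx intr (invmx W) = 1%:M :> 'M[R]_k.
  by rewrite -map_mxM mulmxV // map_mx1.
have VW : map_mx intr (invmx W) *m map_mx intr W = 1%:M :> 'M[R]_k.
  by rewrite -map_mxM mulVmx // map_mx1.
split=> //.
- move=> c; rewrite mulmxA => /hind cW0.
  by rewrite -[c]mulmx1 -WV mulmxA cW0 mul0mx.
- move=> x /hspan [c ->]; exists (c *m map_mx intr (invmx W)).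
  by rewrite mulmxA -(mulmxA c) VW mulmx1.
move=> x; split=> [/hL [z ->]|[z ->]].
  exists (z *m invmx W).
  by rewrite map_mxM !mulmxA -(mulmxA _ _ (map_mx intr W)) VW mulmx1.
by apply/hL; exists (z *m W); rewrite map_mxM mulmxA.
Qed.

End LatticeBasis.

Lemma int_col_unimodular_reduce k (n : 'cV[int]_(1 + k)) :
  exists2 W : 'M[int]_(1 + k), W \in unitmx & exists g : int, W *m n = col_mx g%:M 0.
Proof.
have [L Lu [Rm _ [d _ nE]]] := int_Smith_normal_form n.
exists (invmx L); first by rewrite unitmx_inv.
exists (d`_0 * Rm 0 0); rewrite nE !mulmxA mulVmx // mul1mx.
apply/matrixP => i j; rewrite ord1 !mxE big_ord1 !mxE.
by case: (splitP i) => i' ->; rewrite ?col_mxEu ?col_mxEd !mxE ?ord1 //= mulr0n mul0r.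
Qed.

Section AdaptedBasis.
Variables (R : realType) (l : nat) (L : set 'rV[R]_l) (p : 'rV[R]_l).

Lemma adapted_lattice_basis k (B : 'M[R]_(k, l)) :
  lattice_basis setT L B -> dual_in setT L p -> 0 < dotv p p ->
  exists k' (b0 : 'rV[R]_l) (B' : 'M[R]_(k', l)),
    [/\ lattice_basis setT L (col_mx b0 B'), dotv p b0 != 0 & B' *m p^T = 0].
Proof.
move=> hB [_ p_dual] pp.
have [n Bp] : exists n : 'cV[int]_k, B *m p^T = map_mx intr n.
  have /choice [f fE] : forall i, exists z : int, dotv p (row i B) = z%:~R.
    by move=> i; apply: p_dual; exact: lattice_basis_mem hB.
  exists (\col_i f i).
  by apply/matrixP => i j; rewrite ord1 [RHS]mxE [in RHS]mxE -fE dotvC dotv_row.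
case: k B hB n Bp => [|k] B hB n Bp.
  case: hB => _ _ /(_ p I) [c pE].
  by move: pp; rewrite {2}pE thinmx0 mul0mx dotvE trmx0 mulmx0 mxE ltxx.
have [W Wu [g Wn]] := int_col_unimodular_reduce (n : 'cV_(1 + k)).
set B1 : 'M_(1 + k, l) := map_mx intr W *m B.
have hB1 : lattice_basis setT L B1 by exact: lattice_basis_unimodular.
have B1p : B1 *m p^T = col_mx (g%:~R)%:M 0.
  by rewrite -mulmxA Bp -map_mxM Wn map_col_mx map_scalar_mx map_mx0.
exists k, (usubmx B1), (dsubmx B1); rewrite vsubmxK.
have := B1p; rewrite -{1}[B1]vsubmxK mul_col_mx => /eq_col_mx [b0p ->].
split=> //; rewrite dotvC dotvE b0p mxE eqxx mulr1n.
apply: contraTneq pp => g0; rewrite -leNgt.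
case: hB1 => _ _ /(_ p I) [c pE].
by rewrite {1}pE dotv_mulmx B1p g0 raddf0 col_mx0 mulmx0 mxE.
Qed.

End AdaptedBasis.

Section Hyperplane.
Variables (R : realType) (l k : nat) (L : set 'rV[R]_l) (p b0 : 'rV[R]_l).
Variable B : 'M[R]_(k, l).
Hypotheses (p_b0 : dotv p b0 != 0) (Bp : B *m p^T = 0).

Let E := [set x : 'rV[R]_l | dotv p x = 0].

Lemma dotv_col_mx (u : 'rV[R]_1) (v : 'rV[R]_k) :
  dotv p (row_mx u v *m col_mx b0 B) = u 0 0 * dotv p b0.
Proof.
rewrite dotvC dotv_mulmx mul_col_mx Bp mul_row_col mulmx0 addr0.
by rewrite (dotvC p) dotvE mxE big_ord1.
Qed.

Lemma hyperplane_coord (c : 'rV[R]_(1 + k)) :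
  E (c *m col_mx b0 B) -> c *m col_mx b0 B = rsubmx c *m B.
Proof.
rewrite -[c]hsubmxK /E /= dotv_col_mx row_mxKr => /eqP.
rewrite mulf_eq0 (negbTE p_b0) orbF => /eqP c0.
have -> : lsubmx c = 0 by apply/rowP => i; rewrite ord1 c0 mxE.
by rewrite mul_row_col mul0mx add0r.
Qed.

Lemma hyperplane_lattice_basis :
  lattice_basis setT L (col_mx b0 B) -> lattice_basis E (L `&` E) B.
Proof.
case=> _ hind hspan hL.
have BE (u : 'rV_k) : E (u *m B) by rewrite /E /= dotvC dotv_mulmx Bp mulmx0 mxE.
have lift0 (u : 'rV_k) : row_mx 0 u *m col_mx b0 B = u *m B.
  by rewrite mul_row_col mul0mx add0r.
split.
- by move=> i; rewrite rowE.
- move=> c cB0; have := hind (row_mx 0 c); rewrite lift0 cB0 => /(_ erefl) /eqP.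
  by rewrite row_mx_eq0 => /andP[_ /eqP].
- move=> x xE; have [c xc] := hspan x I.
  by exists (rsubmx c); rewrite xc hyperplane_coord // -xc.
move=> x; split=> [[/hL [z xz] xE]|[z ->]].
  exists (rsubmx z); have := @hyperplane_coord (map_mx intr z).
  by rewrite -xz map_rsubmx; apply.
split; last exact: BE.
by apply/hL; exists (row_mx 0 z); rewrite map_row_mx map_mx0 lift0.
Qed.

Lemma dual_lift q :
  lattice_basis setT L (col_mx b0 B) -> dual_in setT L p ->
  dual_in E (L `&` E) q ->
  exists s, forall n : int, dual_in setT L (q + (s + n%:~R) *: p).
Proof.
move=> hB [_ p_dual] [_ q_dual].
exists (- dotv q b0 / dotv p b0) => n; apply: (dual_in_basis hB) => i.
rewrite dotvDl dotvZl -(splitK i); case: (fintype.split i) => i' /=.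
  have [z pz] := p_dual _ (lattice_basis_mem (lshift k i') hB).
  rewrite rowKu row_id in pz *.
  have -> : dotv q b0 + (- dotv q b0 / dotv p b0 + n%:~R) * dotv p b0 =
            n%:~R * dotv p b0 by field.
  by rewrite pz rpredM ?intr_int.
have BE := lattice_basis_mem i' (hyperplane_lattice_basis hB).
rewrite rowKd (dotvC p (row i' B)) dotv_row Bp mxE mulr0 addr0.
by have [z ->] := q_dual _ BE; rewrite intr_int.
Qed.

End Hyperplane.

Section IntegerShifts.
Variable R : realType.
Implicit Types (s y T : R).

Lemma exists_shift_lt1 T y s : 1 / 2 <= T -> `|y| < T ->
  exists n : int, `|s + n%:~R| <= T /\ `|y + (s + n%:~R)| < 1.
Proof.
move=> T_ge; rewrite ltr_norml => /andP [yT1 yT2].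
have /andP [m_lt m_ge] := ceil_itv (- y - s); set m := Num.ceil _ in m_lt m_ge.
rewrite intrB in m_lt.
have [m_le | m_gt] := leP (s + m%:~R) T.
  by exists m; rewrite ler_norml ltr_norml; split; apply/andP; split; lra.
by exists (m - 1); rewrite intrB ler_norml ltr_norml; split; apply/andP; split; lra.
Qed.

Lemma exists_shift_le_norm y s : 1 / 2 <= `|y| ->
  exists n : int, `|s + n%:~R| <= 1 /\ `|y + (s + n%:~R)| <= `|y|.
Proof.
have [y_ge0 | y_lt0] := leP 0 y.
  rewrite ger0_norm // => y_ge.
  have /andP [m_lt m_ge] := ceil_itv (- s - 1); set m := Num.ceil _ in m_lt m_ge.
  rewrite intrB in m_lt.
  by exists m; rewrite !ler_norml; split; apply/andP; split; lra.
rewrite ltr0_norm // => y_le.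
have /andP [m_lt m_ge] := ceil_itv (- s); set m := Num.ceil _ in m_lt m_ge.
rewrite intrB in m_lt.
by exists m; rewrite !ler_norml; split; apply/andP; split; lra.
Qed.

End IntegerShifts.

Lemma alpha_le (R : realType) (l : nat) (Lam : set 'rV[R]_l) (Omega v : 'rV[R]_l) c :
  dual_ball setT Lam c v -> (alpha Lam Omega c <= (`|dotv v Omega|)%:E)%E.
Proof. by move=> v_ball; apply: ereal_inf_lbound; exists v. Qed.

Section DualLifts.
Variables (R : realType) (l : nat) (Lam : set 'rV[R]_l) (Omega p q : 'rV[R]_l).
Variables (r s : R).
Hypotheses (a_gt0 : 0 < dotv p Omega) (p_gt0 : 0 < normv p) (p_le : normv p <= r).
Hypothesis alpha_a : alpha Lam Omega r = (dotv p Omega)%:E.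
Hypotheses (qp : dotv p q = 0) (q_gt0 : 0 < normv q).
Hypothesis q_le : normv q <= Num.sqrt 3 * r / 2.
Hypothesis q_lift : forall n : int, dual_in setT Lam (q + (s + n%:~R) *: p).

Lemma sqr_normv_lift t :
  normv (q + t *: p) ^+ 2 = normv q ^+ 2 + t ^+ 2 * normv p ^+ 2.
Proof.
rewrite !sqr_normv !(dotvDl, dotvDr, dotvZl, dotvZr) (dotvC q p) qp; ring.
Qed.

Lemma norm_dotv_lift t :
  `|dotv (q + t *: p) Omega| = dotv p Omega * `|dotv q Omega / dotv p Omega + t|.
Proof.
rewrite dotvDl dotvZl -[in RHS](gtr0_norm a_gt0) -normrM; congr `|_|.
by rewrite gtr0_norm //; field; exact: lt0r_neq0.
Qed.

Lemma sqr_normv_q_le : normv q ^+ 2 <= 3 / 4 * r ^+ 2.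
Proof.
have r_ge0 : 0 <= r by apply: le_trans p_le; exact: normv_ge0.
move: q_le; rewrite normv_le ?mulr_ge0 ?divr_ge0 ?sqrtr_ge0 //.
by rewrite !exprMn [Num.sqrt 3 ^+ 2]sqr_sqrtr // [_^-1 ^+ 2]expr2; lra.
Qed.

Lemma lift_in_dual_ball (n : int) c : 0 <= c ->
  normv q ^+ 2 + (s + n%:~R) ^+ 2 * normv p ^+ 2 <= c ^+ 2 ->
  dual_ball setT Lam c (q + (s + n%:~R) *: p).
Proof.
move=> c_ge0 le_c; split; first exact: q_lift.
rewrite normv_le // normv_gt0 -sqr_normv sqr_normv_lift; split=> //.
apply: ltr_wpDr; first by rewrite mulr_ge0 // sqr_ge0.
by rewrite exprn_gt0.
Qed.

Lemma lift_lower_bound : dotv p Omega * r / (2 * normv p) <= `|dotv q Omega|.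
Proof.
have P_neq0 : normv p != 0 by exact: lt0r_neq0.
have r_ge0 : 0 <= r := le_trans (ltW p_gt0) p_le.
(* [lra] and [nra] ignore section hypotheses, hence the explicit [have :=]. *)
have T_ge : 1 / 2 <= r / (2 * normv p).
  by rewrite ler_pdivlMr ?mulr_gt0 //; have := p_le; lra.
rewrite leNgt; apply/negP => x_lt.
have y_lt : `|dotv q Omega / dotv p Omega| < r / (2 * normv p).
  by rewrite normrM normfV (gtr0_norm a_gt0) ltr_pdivrMr // mulrC mulrA.
have [n [t_le y_lt1]] := exists_shift_lt1 s T_ge y_lt.
have tP : (s + n%:~R) ^+ 2 * normv p ^+ 2 <= r ^+ 2 / 4.
  have -> : r ^+ 2 / 4 = (r / (2 * normv p)) ^+ 2 * normv p ^+ 2 by field.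
  by apply: ler_wpM2r; [exact: sqr_ge0 | move: t_le; rewrite ler_norml => /andP[]; nra].
have v_ball : dual_ball setT Lam r (q + (s + n%:~R) *: p).
  apply: (lift_in_dual_ball r_ge0).
  by have := sqr_normv_q_le; lra.
have := alpha_le Omega v_ball; rewrite alpha_a lee_fin norm_dotv_lift.
by rewrite -[X in X <= _]mulr1 ler_pM2l // leNgt y_lt1.
Qed.

Lemma lift_not_farther :
  exists2 v, dual_ball setT Lam (Num.sqrt 7 * r / 2) v &
    `|dotv v Omega| <= `|dotv q Omega|.
Proof.
have y_ge : 1 / 2 <= `|dotv q Omega / dotv p Omega|.
  rewrite normrM normfV (gtr0_norm a_gt0) ler_pdivlMr //.
  apply: le_trans lift_lower_bound.
  by rewrite ler_pdivlMr ?mulr_gt0 //; have := p_le; have := a_gt0; nra.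
have [n [t_le yt_le]] := exists_shift_le_norm s y_ge.
exists (q + (s + n%:~R) *: p).
  apply: lift_in_dual_ball.
    by rewrite !mulr_ge0 ?sqrtr_ge0 ?invr_ge0 //; exact: le_trans (ltW p_gt0) p_le.
  rewrite !exprMn [Num.sqrt 7 ^+ 2]sqr_sqrtr // [_^-1 ^+ 2]expr2.
  have t2 : (s + n%:~R) ^+ 2 <= 1 by move: t_le; rewrite ler_norml => /andP[]; nra.
  have := sqr_normv_q_le; have := normv_ge0 p; have := p_le; nra.
rewrite norm_dotv_lift -[in X in _ <= X](divfK (lt0r_neq0 a_gt0) (dotv q Omega)).
by rewrite normrM (gtr0_norm a_gt0) [X in _ <= X]mulrC ler_pM2l.
Qed.

End DualLifts.

Lemma lee_div_lbound (R : realType) (a m : R) (B : \bar R) :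
  0 <= a -> 0 < m -> (m%:E <= B)%E -> (a%:E / B <= (a / m)%:E)%E.
Proof.
move=> a_ge0 m_gt0 mB; have B_ge0 : (0 <= B)%E by apply: le_trans mB; rewrite lee_fin ltW.
rewrite EFinM; apply: lee_wpmul2l; first by rewrite lee_fin.
have -> : (m^-1)%:E = (m%:E)^-1%E by rewrite inver gt_eqF.
by rewrite lee_pV2 // inE /= lee_fin ltW.
Qed.

Lemma ratio_bounds (R : realType) (a P r : R) (B : \bar R) :
  0 < a -> 0 < P -> P <= r -> ((a * r / (2 * P))%:E <= B)%E ->
  (a%:E / (B * P%:E) <= (2 / r)%:E)%E /\ (a%:E <= 2%:E * B)%E.
Proof.
move=> a_gt0 P_gt0 P_le aB; have r_gt0 : 0 < r := lt_le_trans P_gt0 P_le.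
split.
  have BP : ((a * r / 2)%:E <= B * P%:E)%E.
    have -> : a * r / 2 = a * r / (2 * P) * P by field; exact: lt0r_neq0.
    by rewrite EFinM lee_wpmul2r // lee_fin ltW.
  have ar_gt0 : 0 < a * r / 2 by rewrite divr_gt0 ?mulr_gt0.
  have := lee_div_lbound (ltW a_gt0) ar_gt0 BP.
  have -> // : a / (a * r / 2) = 2 / r.
  by field; rewrite !lt0r_neq0.
have two_ge0 : (0 <= 2%:E :> \bar R)%E by rewrite lee_fin.
apply: le_trans (lee_wpmul2l two_ge0 aB).
by rewrite -EFinM lee_fin mulrA ler_pdivlMr ?mulr_gt0 //; nra.
Qed.

Unset Implicit Arguments. Set Strict Implicit.

Theorem lemma8p2 (R : realType) (l : nat) (Lam : set 'rV[R]_l)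
  (Omega : 'rV[R]_l) (r : R) (p : 'rV[R]_l) :
  is_lattice_of setT Lam ->
  0 < r ->
  dual_ball setT Lam r !=set0 ->
  dual_ball setT Lam r p ->
  alpha Lam Omega r = (dotv p Omega)%:E ->
  0 < dotv p Omega ->
  let E := [set x : 'rV[R]_l | dotv p x = 0] in
  let Lam0 := Lam `&` E in
  let beta := alpha_in E Lam0 Omega (Num.sqrt 3 * r / 2) in
  is_lattice_of E Lam0 /\
  ((dotv p Omega)%:E / (beta * (normv p)%:E) <= (2 / r)%:E)%E /\
  ((dotv p Omega)%:E <= 2%:E * beta)%E /\
  (alpha Lam Omega (Num.sqrt 7 * r / 2) <= beta)%E.
Proof.
(* [0 < r] and the nonemptiness of the dual ball both follow from [p]. *)
move=> /is_lattice_ofP [k [B hB]] _ _ [p_dual [p_gt0 p_le]] alpha_a a_gt0 E Lam0 beta.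
have pp : 0 < dotv p p by rewrite -normv_gt0.
have [k' [b0 [B' [hB0 pb0 B'p]]]] := adapted_lattice_basis hB p_dual pp.
have lifts q : dual_ball E Lam0 (Num.sqrt 3 * r / 2) q ->
    exists s, forall n : int, dual_in setT Lam (q + (s + n%:~R) *: p).
  by case=> q_dual _; apply: (dual_lift pb0 B'p hB0 p_dual); exact q_dual.
have beta_ge : ((dotv p Omega * r / (2 * normv p))%:E <= beta)%E.
  apply: le_ereal_inf_tmp => _ [q q_ball <-]; have [s q_lift] := lifts q q_ball.
  case: q_ball => [[qp _] [q_gt0 q_le]].
  by rewrite lee_fin (lift_lower_bound a_gt0 p_gt0 p_le alpha_a qp q_gt0 q_le q_lift).
have [ratio_le a_le] := ratio_bounds a_gt0 p_gt0 p_le beta_ge.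
split.
  by apply/is_lattice_ofP; exists k', B'; exact (hyperplane_lattice_basis pb0 B'p hB0).
split=> //; split=> //.
apply: le_ereal_inf_tmp => _ [q q_ball <-]; have [s q_lift] := lifts q q_ball.
case: q_ball => [[qp _] [q_gt0 q_le]].
have [v v_ball v_le] := lift_not_farther a_gt0 p_gt0 p_le alpha_a qp q_gt0 q_le q_lift.
by apply: le_trans (alpha_le Omega v_ball) _; rewrite lee_fin.
Qed.
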